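(* Let $L_0+\lambda L_1\in\mathbb{C}[\lambda]^{m\times n}$ be a matrix pencil. Suppose $U\in\mathbb{C}^{m\times m}$, $V\in\mathbb{C}^{n\times n}$ are unitary and \[ U^*(L_0+\lambda L_1)V=\begin{bmatrix}\tilde A & X\\ 0 & A_r\end{bmatrix}+\lambda\begin{bmatrix}\tilde E & Y\\ 0 & E_r\end{bmatrix}, \] where $A_r$ has full column rank and $\tilde A+\lambda\tilde E$ is block upper triangular with block rows of sizes $s_1,\dots,s_k$ and block columns of sizes $t_1,\dots,t_k$ (blocks $A_{i,j},E_{i,j}\in\mathbb{C}^{s_i\times t_j}$), with zero block-diagonal blocks in $\tilde A$, each $E_{i,i}$ of full row rank $s_i$ and each $A_{i,i+1}$ of full column rank $t_{i+1}$. Let $U_d$ and $V_d$ be unitary block-diagonal matrices, conformal with this block structure (and equal to the identity on the rows/columns outside $\tilde A+\lambda\tilde E$), such that, with $\hat U=UU_d$ and $\hat V=VV_d$ in place of $U,V$, the stairs take the form $A_{i,i+1}=\begin{bmatrix}\hat A_{i,i+1}\\0\end{bmatrix}$, $E_{i,i}=\begin{bmatrix}0&\hat E_{i,i}\end{bmatrix}$ with $\hat A_{i,i+1},\hat E_{i,i}$ square, upper triangular and invertible. Let $S$ and $T$ be unit upper triangular matrices bidiagonalizing the resulting leading subpencil $\tilde A+\lambda\tilde E$ (i.e. eliminating all blocks except the $E_{i,i}$ and $A_{i,i+1}$), extended by identity blocks to size $m\times m$ and $n\times n$. Define $\hat S:=UU_dS$ and $\hat T:=VV_dT$, $\sigma_i:=\sum_{j=1}^i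 s_j$, $\tau_i:=\sum_{j=1}^i t_j$. Define the Wong sequences $\mathcal{U}_0=\{0\}\subseteq\mathbb{C}^m$ and, for $i=1,\dots,k$, $\mathcal{V}_i=L_0^{\leftarrow}\mathcal{U}_{i-1}\subseteq\mathbb{C}^n$ and $\mathcal{U}_i=L_1\mathcal{V}_i\subseteq\mathbb{C}^m$. Then for $i=1,\dots,k$, \[ \mathcal{U}_i=\operatorname{im}\hat S\begin{bmatrix}I_{\sigma_i}\\0\end{bmatrix},\qquad \mathcal{V}_i=\operatorname{im}\hat T\begin{bmatrix}I_{\tau_i}\\0\end{bmatrix}, \] i.e. the (in general non-orthonormal) leading block columns of $\hat S$ and $\hat T$ span the nested Wong spaces.
   Context: For a matrix $M$ and subspaces $\mathcal{V},\mathcal{U}$: $M\mathcal{V}:=\{Mv: v\in\mathcal{V}\}$ is the image and $M^{\leftarrow}\mathcal{U}:=\{v: Mv\in\mathcal{U}\}$ is the preimage. A unit upper triangular matrix is upper triangular with ones on the diagonal. It is known (and used here) that for such a staircase form the Wong spaces satisfy $\mathcal{U}_i=\operatorname{im}U\begin{bmatrix}I_{\sigma_i}\\0\end{bmatrix}$ and $\mathcal{V}_i=\operatorname{im}V\begin{bmatrix}I_{\tau_i}\\0\end{bmatrix}$. *)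

From HB Require Import structures.
From mathcomp Require Import all_boot all_order all_algebra.
Set Implicit Arguments. Unset Strict Implicit. Unset Printing Implicit Defensive.
Import Order.TTheory GRing.Theory Num.Theory.
Local Open Scope ring_scope.

Definition ctrmx (C : numClosedFieldType) m n (A : 'M[C]_(m, n)) : 'M[C]_(n, m) :=
  (map_mx Num.conj A)^T.

Definition unitary (C : numClosedFieldType) n (A : 'M[C]_n) : Prop :=
  ctrmx A *m A = 1%:M.

Definition upper_tri (R : nzRingType) n (A : 'M[R]_n) : Prop :=
  forall i j : 'I_n, (j < i)%N -> A i j = 0.

Definition unit_upper_tri (R : nzRingType) n (A : 'M[R]_n) : Prop :=
  upper_tri A /\ forall i, A i i = 1.

(* partial sums (0-based): psum s i = s 0 + ... + s (i-1);  the paper's sigma_i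
   (1-based, sigma_i = s_1 + ... + s_i) is psum s i. *)
Definition psum (s : nat -> nat) (i : nat) : nat := (\sum_(j < i) s j)%N.

(* the p x q block of A whose top-left entry is at (r0, c0) (entries outside A read as 0) *)
Definition getblk (R : nzRingType) M N (A : 'M[R]_(M, N)) (r0 c0 p q : nat) : 'M[R]_(p, q) :=
  \matrix_(a < p, b < q)
    match (insub (r0 + a)%N : option 'I_M), (insub (c0 + b)%N : option 'I_N) with
    | Some r, Some c => A r c
    | _, _ => 0
    end.

Definition blkdiag (R : nzRingType) (s : nat -> nat) (k : nat) (A : 'M[R]_(psum s k)) : Prop :=
  forall i j, (i < k)%N -> (j < k)%N -> i != j ->
    getblk A (psum s i) (psum s j) (s i) (s j) = 0.

Definition img (R : nzRingType) a b (M : 'M[R]_(a, b)) (P : 'cV[R]_b -> Prop) : 'cV[R]_a -> Prop :=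
  fun x => exists v, P v /\ x = M *m v.
Definition preimg (R : nzRingType) a b (M : 'M[R]_(a, b)) (P : 'cV[R]_a -> Prop) : 'cV[R]_b -> Prop :=
  fun v => P (M *m v).
Definition im (R : nzRingType) a b (M : 'M[R]_(a, b)) : 'cV[R]_a -> Prop :=
  img M (fun _ => True).

Fixpoint wongU (R : nzRingType) m n (L0 L1 : 'M[R]_(m, n)) (i : nat) : 'cV[R]_m -> Prop :=
  match i with
  | 0 => fun x => x = 0
  | i'.+1 => img L1 (preimg L0 (wongU L0 L1 i'))
  end.
Definition wongV (R : nzRingType) m n (L0 L1 : 'M[R]_(m, n)) (i : nat) : 'cV[R]_n -> Prop :=
  preimg L0 (wongU L0 L1 i.-1).
Arguments blkdiag {R} s k A.

(* In the coordinates given by U and V the pencil is in staircase form, and there the Wong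
   spaces are coordinate subspaces: U_i is spanned by the first sigma_i unit vectors and V_i
   by the first tau_i.  The block upper triangular shape makes A~ map the first tau_(i+1)
   coordinates into the first sigma_i, and E~ the first tau_i into the first sigma_i.
   Conversely, full column rank of A_r and of the stairs A_(j,j+1) forces every preimage under
   L0 of the first sigma_i coordinates into the first tau_(i+1) (descending through the block
   rows), and full row rank of the stairs E_(j,j) makes E~ map onto the first sigma_i
   coordinates (ascending through them).  Finally U_d S and V_d T are invertible and block
   upper triangular, so they preserve these coordinate subspaces. *)

From HB Require Import structures.
From mathcomp Require Import all_boot all_order all_algebra.
From Corelib Require Import Setoid.
Set Implicit Arguments. Unset Strict Implicit. Unset Printing Implicit Defensive.
Import Order.TTheory GRing.Theory Num.Theory.
Local Open Scope ring_scope.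

Section PartialSums.
Variable s : nat -> nat.

Lemma psumS i : psum s i.+1 = (psum s i + s i)%N.
Proof. by rewrite /psum big_ord_recr. Qed.

Lemma leq_psum i j : (i <= j)%N -> (psum s i <= psum s j)%N.
Proof.
move=> /subnKC <-; elim: (j - i)%N => [|d IH]; first by rewrite addn0.
by rewrite addnS psumS (leq_trans IH) ?leq_addr.
Qed.

Lemma psum_block_leq k m j : (j < k)%N -> (psum s j + s j <= psum s k + m)%N.
Proof. by move=> jk; rewrite -psumS (leq_trans (leq_psum jk)) ?leq_addr. Qed.

Lemma psum_ltn i j : (psum s i < psum s j)%N -> (i < j)%N.
Proof. by apply: contraTT; rewrite -!leqNgt => /leq_psum. Qed.

Lemma psum_block k a : (a < psum s k)%N ->
  exists2 i, (i < k)%N & (psum s i <= a < psum s i.+1)%N.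
Proof.
elim: k => [|k IH]; first by rewrite /psum big_ord0.
case: (ltnP a (psum s k)) => [/IH[i ik ai] _|ka ak]; last by exists k; rewrite ?ka ?ak.
by exists i => //; apply: ltnW.
Qed.

End PartialSums.

Section Blocks.
Variable R : nzRingType.

Lemma sum_window (V : nmodType) N c q (cqN : (c + q <= N)%N) (f : 'I_N -> V) :
  (forall b : 'I_N, ~~ (c <= b < c + q)%N -> f b = 0) ->
  \sum_(b < N) f b = \sum_(j < q) f (widen_ord cqN (rshift c j)).
Proof.
move=> f0; rewrite (bigID (fun b : 'I_N => b < c + q)%N) /= [X in _ + X]big1; last first.
  by move=> b cqb; rewrite f0 // negb_and cqb orbT.
rewrite addr0 big_ord_narrow big_split_ord /= big1 ?add0r // => b _.
by rewrite f0 //= negb_and -ltnNge ltn_ord.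
Qed.

Lemma getblk_win M N (A : 'M[R]_(M, N)) r c p q
    (rpM : (r + p <= M)%N) (cqN : (c + q <= N)%N) a b :
  getblk A r c p q a b = A (widen_ord rpM (rshift r a)) (widen_ord cqN (rshift c b)).
Proof.
have ra : (r + a < M)%N by apply: leq_trans rpM; rewrite ltn_add2l.
have cb : (c + b < N)%N by apply: leq_trans cqN; rewrite ltn_add2l.
rewrite mxE (insubT (fun x => x < M)%N ra) (insubT (fun x => x < N)%N cb).
by congr (A _ _); apply: val_inj.
Qed.

Lemma getblk_eq0P M N (A : 'M[R]_(M, N)) r c p q :
  getblk A r c p q = 0 <->
  (forall (a : 'I_M) (b : 'I_N), (r <= a < r + p)%N -> (c <= b < c + q)%N -> A a b = 0).
Proof.
split=> [A0 a b /andP[ra ap] /andP[cb bq] | A0].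
  have a' : (a - r < p)%N by rewrite ltn_subLR.
  have b' : (b - c < q)%N by rewrite ltn_subLR.
  move/matrixP: A0 => /(_ (Ordinal a') (Ordinal b')); rewrite !mxE /= !subnKC //.
  by rewrite !valK.
apply/matrixP => a b; rewrite !mxE.
case: insubP => // a' _ ea; case: insubP => // b' _ eb.
by apply: A0; rewrite ?ea ?eb leq_addr ltn_add2l ltn_ord.
Qed.

Lemma getblkB M N (A B : 'M[R]_(M, N)) r c p q :
  getblk (A - B) r c p q = getblk A r c p q - getblk B r c p q.
Proof.
apply/matrixP => a b; rewrite !mxE.
case: (insub (r + a)%N : option 'I_M) => [a'|]; last by rewrite subr0.
by case: (insub (c + b)%N : option 'I_N) => [b'|]; rewrite ?mxE ?subr0.
Qed.

Lemma getblk_cV N (y : 'cV[R]_N) c q (cqN : (c + q <= N)%N) j i :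
  getblk y c 0 q 1 j i = y (widen_ord cqN (rshift c j)) 0.
Proof. by rewrite (getblk_win _ cqN (leqnn (0 + 1))) ord1; congr (y _ _); apply: val_inj. Qed.

Lemma getblk_mul M N (A : 'M[R]_(M, N)) (w : 'cV[R]_N) r c p q :
  (r + p <= M)%N -> (c + q <= N)%N ->
  (forall (a : 'I_M) (b : 'I_N), (r <= a < r + p)%N -> ~~ (c <= b < c + q)%N ->
     A a b * w b 0 = 0) ->
  getblk (A *m w) r 0 p 1 = getblk A r c p q *m getblk w c 0 q 1.
Proof.
move=> rpM cqN Aw0; apply/matrixP => a i; rewrite (getblk_cV _ rpM) !mxE (sum_window cqN).
  by apply: eq_bigr => j _; rewrite (getblk_win _ rpM cqN) (getblk_cV _ cqN).
by move=> b; apply: Aw0; rewrite /= leq_addr ltn_add2l ltn_ord.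
Qed.

Definition place_cV N c q (z : 'cV[R]_q) : 'cV[R]_N :=
  \col_(b < N) if (c <= b)%N then oapp (fun j : 'I_q => z j 0) 0 (insub (b - c)%N) else 0.

Lemma place_cV_out N c q (z : 'cV[R]_q) (b : 'I_N) :
  ~~ (c <= b < c + q)%N -> place_cV N c z b 0 = 0.
Proof.
rewrite mxE; case: ifP => //= cb; rewrite -ltn_subLR //.
by case: insubP => //= j ->.
Qed.

Lemma getblk_place_cV N c q (z : 'cV[R]_q) : (c + q <= N)%N ->
  getblk (place_cV N c z) c 0 q 1 = z.
Proof.
move=> cqN; apply/matrixP => j i.
by rewrite (getblk_cV _ cqN) mxE /= leq_addr addKn valK ord1.
Qed.

Lemma getblk_ulsubmx m1 m2 n1 n2 (A : 'M[R]_(m1 + m2, n1 + n2)) r c p q :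
  (r + p <= m1)%N -> (c + q <= n1)%N -> getblk (ulsubmx A) r c p q = getblk A r c p q.
Proof.
move=> rp cq; apply/matrixP => a b.
have rpm : (r + p <= m1 + m2)%N by apply: leq_trans rp (leq_addr m2 m1).
have cqn : (c + q <= n1 + n2)%N by apply: leq_trans cq (leq_addr n2 n1).
rewrite (getblk_win _ rp cq) (getblk_win _ rpm cqn).
by rewrite !mxE; congr (A _ _); apply: val_inj.
Qed.

Lemma getblk_drsubmx m1 m2 n1 n2 (A : 'M[R]_(m1 + m2, n1 + n2)) :
  getblk A m1 n1 m2 n2 = drsubmx A.
Proof.
apply/matrixP => a b; rewrite (getblk_win _ (leqnn _) (leqnn _)) !mxE.
by congr (A _ _); apply: val_inj.
Qed.

End Blocks.

Section Heads.
Variable R : nzRingType.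

Definition head_supp N r (y : 'cV[R]_N) : Prop :=
  forall a : 'I_N, (r <= a)%N -> y a 0 = 0.

Definition maps_head M N (A : 'M[R]_(M, N)) c r : Prop :=
  forall (a : 'I_M) (b : 'I_N), (b < c)%N -> (r <= a)%N -> A a b = 0.

Lemma head_suppW N r r' (y : 'cV[R]_N) : (r <= r')%N -> head_supp r y -> head_supp r' y.
Proof. by move=> rr' y0 a r'a; apply: y0; apply: leq_trans r'a. Qed.

Lemma head_supp0 N (y : 'cV[R]_N) : head_supp 0 y <-> y = 0.
Proof.
split=> [y0|-> a _]; last by rewrite mxE.
by apply/matrixP => a i; rewrite ord1 mxE y0.
Qed.

Lemma head_suppD N r (x y : 'cV[R]_N) :
  head_supp r x -> head_supp r y -> head_supp r (x + y).
Proof. by move=> x0 y0 a ra; rewrite !mxE x0 ?y0 ?addr0. Qed.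

Lemma head_suppB N r (x y : 'cV[R]_N) :
  head_supp r x -> head_supp r y -> head_supp r (x - y).
Proof. by move=> x0 y0 a ra; rewrite !mxE x0 ?y0 ?subr0. Qed.

Lemma maps_head_supp M N (A : 'M[R]_(M, N)) c r w :
  maps_head A c r -> head_supp c w -> head_supp r (A *m w).
Proof.
move=> A0 w0 a ra; rewrite mxE big1 // => b _.
by case: (ltnP b c) => bc; [rewrite A0 ?mul0r | rewrite w0 ?mulr0].
Qed.

Lemma maps_head_mul M N P (A : 'M[R]_(M, N)) (B : 'M[R]_(N, P)) c c' r :
  maps_head A c' r -> maps_head B c c' -> maps_head (A *m B) c r.
Proof.
move=> A0 B0 a b bc ra; rewrite mxE big1 // => e _.
by case: (ltnP e c') => ec'; [rewrite A0 ?mul0r | rewrite B0 ?mulr0 ?(leq_trans bc)].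
Qed.

Lemma maps_head_dlsubmx m1 m2 n1 n2 (A : 'M[R]_(m1 + m2, n1 + n2)) :
  dlsubmx A = 0 -> maps_head A n1 m1.
Proof.
move=> /matrixP dl0 a b; case: (split_ordP a) => a' -> /=; first by move=> _; rewrite leqNgt ltn_ord.
case: (split_ordP b) => b' -> //= _ _.
by move: (dl0 a' b'); rewrite !mxE.
Qed.

Lemma maps_head_block_mx n1 n2 (A : 'M[R]_n1) (D : 'M[R]_n2) r :
  (r <= n1)%N -> maps_head A r r -> maps_head (block_mx A 0 0 D) r r.
Proof.
move=> rn1 A0 a b; case: (split_ordP a) => a' ->; case: (split_ordP b) => b' -> /= br ra.
- by rewrite block_mxEul A0.
- by rewrite block_mxEur mxE.
- by rewrite block_mxEdl mxE.
by move: (leq_trans br rn1); rewrite ltnNge leq_addr.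
Qed.

Lemma maps_head_upper_tri n (A : 'M[R]_n) r : upper_tri A -> maps_head A r r.
Proof. by move=> A0 a b br ra; rewrite A0 // (leq_trans br ra). Qed.

Lemma pid_mulmxE N P r (A : 'M[R]_(N, P)) a b :
  ((pid_mx r : 'M_N) *m A) a b = if (a < r)%N then A a b else 0.
Proof.
rewrite mxE (bigD1 a) //= big1 ?addr0 => [|c ca].
  by rewrite mxE eqxx /=; case: ifP; rewrite ?mul1r ?mul0r.
by rewrite mxE val_eqE eq_sym (negPf ca) mul0r.
Qed.

Lemma mulmx_pidE M N r (A : 'M[R]_(M, N)) a b :
  (A *m (pid_mx r : 'M_N)) a b = if (b < r)%N then A a b else 0.
Proof.
rewrite mxE (bigD1 b) //= big1 ?addr0 => [|c cb].
  by rewrite mxE eqxx /=; case: ifP; rewrite ?mulr1 ?mulr0.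
by rewrite mxE val_eqE (negPf cb) mulr0.
Qed.

Lemma head_supp_pid N r (y : 'cV[R]_N) : (r <= N)%N ->
  head_supp r y <-> exists v : 'cV[R]_r, y = pid_mx r *m v.
Proof.
move=> rN; split=> [y0|[v ->] a ra]; last first.
  by rewrite mxE big1 // => b _; rewrite mxE ltnNge ra andbF mul0r.
exists (pid_mx r *m y); rewrite mulmxA pid_mx_id //; apply/matrixP => a i.
by rewrite pid_mulmxE ord1; case: ltnP => // ra; rewrite y0.
Qed.

Lemma maps_head_of_blocks k p q (s t : nat -> nat) d
    (A : 'M[R]_(psum s k + p, psum t k + q)) :
  maps_head A (psum t k) (psum s k) ->
  (forall i j, (i < k)%N -> (j < i + d)%N -> getblk A (psum s i) (psum t j) (s i) (t j) = 0) ->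
  forall j j', (j' <= j + d)%N -> (j' <= k)%N -> maps_head A (psum t j') (psum s j).
Proof.
move=> A_tail A0 j j' j'jd j'k a b bt sa.
case: (ltnP a (psum s k)) => ak; last by apply: A_tail => //; apply: leq_trans bt (leq_psum _ j'k).
have [i ik /andP[sia ai]] := psum_block ak.
have [l _ /andP[tlb bl]] := psum_block (leq_trans bt (leq_psum _ j'k)).
have li : (l < i + d)%N.
  have lj' : (l < j')%N by apply: psum_ltn; apply: leq_ltn_trans tlb bt.
  have ji : (j < i.+1)%N by apply: (@psum_ltn s); apply: leq_ltn_trans sa ai.
  by apply: leq_trans lj' (leq_trans j'jd _); rewrite leq_add2r -ltnS.
by move/getblk_eq0P: (A0 i l ik li) => /(_ a b); apply; rewrite -!psumS ?sia ?tlb.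
Qed.

Lemma maps_head_blkdiag (s : nat -> nat) k (D : 'M[R]_(psum s k)) j :
  blkdiag s k D -> maps_head D (psum s j) (psum s j).
Proof.
move=> D0 a b bj ja.
have [i ik /andP[sia ai]] := psum_block (ltn_ord a).
have [l lk /andP[slb bl]] := psum_block (ltn_ord b).
have li : (l < i)%N.
  have lj : (l < j)%N by apply: (@psum_ltn s); apply: leq_ltn_trans slb bj.
  have ji : (j < i.+1)%N by apply: (@psum_ltn s); apply: leq_ltn_trans ja ai.
  exact: leq_trans lj ji.
move/getblk_eq0P: (D0 i l ik lk (negbT (gtn_eqF li))) => /(_ a b).
by apply; rewrite -!psumS ?sia ?slb.
Qed.

Lemma unit_upper_tri_block n1 n2 (A : 'M[R]_n1) :
  unit_upper_tri A -> unit_upper_tri (block_mx A 0 0 (1%:M : 'M_n2)).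
Proof.
case=> A0 A1; split=> [a b|a].
  case: (split_ordP a) => a' ->; case: (split_ordP b) => b' -> /= ba.
  - by rewrite block_mxEul A0.
  - by move: (ltn_trans ba (ltn_ord a')); rewrite ltnNge leq_addr.
  - by rewrite block_mxEdl mxE.
  by rewrite block_mxEdr mxE -val_eqE /= gtn_eqF // -(ltn_add2l n1).
by case: (split_ordP a) => a' ->; rewrite ?block_mxEul ?block_mxEdr ?A1 // mxE eqxx.
Qed.

End Heads.

Section Invertible.
Variable F : fieldType.

Lemma maps_head_invmx N r (X : 'M[F]_N) :
  X \in unitmx -> maps_head X r r -> maps_head (invmx X) r r.
Proof.
move=> Xu X0; pose W : 'M[F]_N := pid_mx r.
have WXt : W *m X^T = W *m X^T *m W.
  apply/matrixP => b a; rewrite [RHS]mulmx_pidE; case: ltnP => // ra.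
  by rewrite pid_mulmxE; case: ifP => // br; rewrite mxE X0.
(* The rows of [W *m X^T] lie in the row space of [W] and have the same rank, so span it. *)
have sub : (W *m X^T <= W)%MS by rewrite WXt submxMl.
have rk : \rank (W *m X^T) = \rank W by rewrite mxrankMfree // row_free_unit unitmx_tr.
have /submxP[D WD] : (W <= W *m X^T)%MS by rewrite -(mxrank_leqif_sup sub).2 rk.
have WinvD : W *m (invmx X)^T = D *m W.
  by rewrite trmx_inv {1}WD -!mulmxA mulmxV ?unitmx_tr ?mulmx1.
move=> a b br ra; move/matrixP: WinvD => /(_ b a).
by rewrite pid_mulmxE mulmx_pidE br ltnNge ra mxE.
Qed.

Lemma head_supp_im N r (X : 'M[F]_N) (y : 'cV[F]_N) : (r <= N)%N ->
  X \in unitmx -> maps_head X r r ->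
  head_supp r y <-> im (X *m (pid_mx r : 'M_(N, r))) y.
Proof.
move=> rN Xu X0; split=> [|[v [_ ->]]]; last first.
  by rewrite -mulmxA; apply: maps_head_supp X0 _; apply/head_supp_pid => //; exists v.
move/(maps_head_supp (maps_head_invmx Xu X0))/(head_supp_pid _ rN) => [v Xy].
by exists v; split => //; rewrite -mulmxA -Xy mulKVmx.
Qed.

Lemma im_mulmx_unit M N (P : 'M[F]_M) (B : 'M[F]_(M, N)) x : P \in unitmx ->
  im (P *m B) x <-> im B (invmx P *m x).
Proof.
move=> Pu; split=> [[v [_ ->]]|[v [_ Px]]]; exists v; split => //.
  by rewrite -mulmxA mulKmx.
by rewrite -mulmxA -Px mulKVmx.
Qed.

Lemma unit_upper_tri_unitmx n (A : 'M[F]_n) :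
  unit_upper_tri A -> A \in unitmx.
Proof.
case=> A0 A1; rewrite unitmxE -det_tr det_trig.
  by rewrite big1 ?unitr1 // => i _; rewrite mxE A1.
by apply/is_trig_mxP => a b ab; rewrite mxE A0.
Qed.

Lemma head_supp_im_blkdiag_triu (s : nat -> nat) k m j
    (P : 'M[F]_(psum s k + m)) (D S : 'M[F]_(psum s k)) x :
  (j <= k)%N -> P \in unitmx -> block_mx D 0 0 (1%:M : 'M_m) \in unitmx ->
  blkdiag s k D -> unit_upper_tri S ->
  head_supp (psum s j) (invmx P *m x) <->
  im (P *m block_mx D 0 0 1%:M *m block_mx S 0 0 1%:M *m
      (pid_mx (psum s j) : 'M_(psum s k + m, psum s j))) x.
Proof.
move=> jk Pu Du D0 /(unit_upper_tri_block m) S1.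
pose X := block_mx D 0 0 1%:M *m block_mx S 0 0 (1%:M : 'M_m).
have Xu : X \in unitmx by rewrite unitmx_mul Du unit_upper_tri_unitmx.
have X0 : maps_head X (psum s j) (psum s j).
  apply: maps_head_mul (maps_head_upper_tri S1.1).
  by apply: maps_head_block_mx (maps_head_blkdiag D0); apply: leq_psum.
rewrite (head_supp_im _ _ Xu X0) ?(leq_trans (leq_psum s jk) (leq_addr _ _)) //.
by rewrite -im_mulmx_unit // /X !mulmxA.
Qed.

End Invertible.

Section StairSteps.
Variable F : fieldType.

Lemma head_supp_row_full M N (A : 'M[F]_(M, N)) r c p q (w : 'cV[F]_N) :
  (r + p <= M)%N -> (c + q <= N)%N -> row_full (getblk A r c p q) ->
  maps_head A c r -> head_supp (c + q) w -> head_supp r (A *m w) -> head_supp c w.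
Proof.
move=> rpM cqN Afull A0 w0 Aw0.
have Ew : getblk (A *m w) r 0 p 1 = getblk A r c p q *m getblk w c 0 q 1.
  apply: getblk_mul => // a b /andP[ra _]; rewrite negb_and -ltnNge -leqNgt.
  by case/orP => [bc|cqb]; [rewrite A0 ?mul0r | rewrite w0 ?mulr0].
have wblk0 : getblk w c 0 q 1 = 0.
  apply: (row_full_inj Afull); rewrite mulmx0 -Ew.
  by apply/getblk_eq0P => a i /andP[ra _] _; rewrite ord1 Aw0.
move=> b cb; case: (ltnP b (c + q)) => bcq; last exact: w0.
by move/getblk_eq0P: wblk0 => /(_ b 0); apply; rewrite ?cb.
Qed.

Lemma head_supp_row_free M N (A : 'M[F]_(M, N)) r c p q (y : 'cV[F]_M) :
  (r + p <= M)%N -> (c + q <= N)%N -> row_free (getblk A r c p q) ->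
  maps_head A (c + q) (r + p) -> head_supp (r + p) y ->
  exists2 u, head_supp (c + q) u & head_supp r (y - A *m u).
Proof.
move=> rpM cqN /row_freeP[B AB] A0 y0.
pose u := place_cV N c (B *m getblk y r 0 p 1).
have u_out : forall b : 'I_N, ~~ (c <= b < c + q)%N -> u b 0 = 0 := place_cV_out _.
have u_head : head_supp (c + q) u.
  by move=> b cqb; rewrite u_out // negb_and -leqNgt cqb orbT.
have Au : getblk (A *m u) r 0 p 1 = getblk y r 0 p 1.
  rewrite (getblk_mul rpM cqN) ?getblk_place_cV ?mulmxA ?AB ?mul1mx //.
  by move=> a b _ /u_out ->; rewrite mulr0.
exists u => // a ra; case: (ltnP a (r + p)) => arp.
  have : getblk (y - A *m u) r 0 p 1 = 0 by rewrite getblkB Au subrr.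
  by move/getblk_eq0P => /(_ a 0); apply; rewrite ?ra.
exact: (head_suppB y0 (maps_head_supp A0 u_head)).
Qed.

End StairSteps.

Section WongEquivalence.
Variable F : fieldType.

Lemma wongU_mulmx m n (P : 'M[F]_m) (Q : 'M[F]_n) (M0 M1 : 'M[F]_(m, n)) i x :
  P \in unitmx -> Q \in unitmx ->
  wongU (P *m M0 *m Q) (P *m M1 *m Q) i x <-> wongU M0 M1 i (invmx P *m x).
Proof.
move=> Pu Qu; elim: i x => [|i IH] x /=.
  split=> [->|Px0]; first by rewrite mulmx0.
  by rewrite -(mulKVmx Pu x) Px0 mulmx0.
split=> [[v [v0 ->]]|[w [w0 Px]]].
  exists (Q *m v); split; last by rewrite -!mulmxA mulKmx.
  by move/IH: v0; rewrite -!mulmxA mulKmx.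
exists (invmx Q *m w); split; last by rewrite -!mulmxA mulKVmx // -Px mulKVmx.
by apply/IH; rewrite -!mulmxA mulKmx // mulKVmx.
Qed.

Lemma wongV_mulmx m n (P : 'M[F]_m) (Q : 'M[F]_n) (M0 M1 : 'M[F]_(m, n)) i v :
  P \in unitmx -> Q \in unitmx ->
  wongV (P *m M0 *m Q) (P *m M1 *m Q) i v <-> wongV M0 M1 i (Q *m v).
Proof.
move=> Pu Qu; have := wongU_mulmx M0 M1 i.-1 (P *m M0 *m Q *m v) Pu Qu.
by rewrite /wongV /preimg -!mulmxA mulKmx.
Qed.

End WongEquivalence.

Section Staircase.
Variables (F : fieldType) (k p q : nat) (s t : nat -> nat).
Variables M0 M1 : 'M[F]_(psum s k + p, psum t k + q).
Hypothesis M0_dl : dlsubmx M0 = 0.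
Hypothesis M1_dl : dlsubmx M1 = 0.
Hypothesis Ar_rank : \rank (drsubmx M0) = q.
Hypothesis M0_lower : forall i j, (j < i)%N -> (i < k)%N ->
  getblk (ulsubmx M0) (psum s i) (psum t j) (s i) (t j) = 0.
Hypothesis M1_lower : forall i j, (j < i)%N -> (i < k)%N ->
  getblk (ulsubmx M1) (psum s i) (psum t j) (s i) (t j) = 0.
Hypothesis M0_diag : forall i, (i < k)%N ->
  getblk (ulsubmx M0) (psum s i) (psum t i) (s i) (t i) = 0.
Hypothesis E_rank : forall i, (i < k)%N ->
  \rank (getblk (ulsubmx M1) (psum s i) (psum t i) (s i) (t i)) = s i.
Hypothesis A_rank : forall i, (i.+1 < k)%N ->
  \rank (getblk (ulsubmx M0) (psum s i) (psum t i.+1) (s i) (t i.+1)) = t i.+1.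

Lemma getblk_lead (A : 'M[F]_(psum s k + p, psum t k + q)) i j : (i < k)%N -> (j < k)%N ->
  getblk (ulsubmx A) (psum s i) (psum t j) (s i) (t j) =
  getblk A (psum s i) (psum t j) (s i) (t j).
Proof. by move=> ik jk; rewrite getblk_ulsubmx // -psumS leq_psum. Qed.

Let M0_blocks i j : (i < k)%N -> (j < i + 1)%N ->
  getblk M0 (psum s i) (psum t j) (s i) (t j) = 0.
Proof.
move=> ik; rewrite addn1 ltnS leq_eqVlt => /orP[/eqP->|ji]; first by rewrite -getblk_lead ?M0_diag.
by rewrite -getblk_lead ?M0_lower // (ltn_trans ji ik).
Qed.

Let M1_blocks i j : (i < k)%N -> (j < i + 0)%N ->
  getblk M1 (psum s i) (psum t j) (s i) (t j) = 0.
Proof. by move=> ik; rewrite addn0 => ji; rewrite -getblk_lead ?M1_lower // (ltn_trans ji ik). Qed.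

Lemma M0_head j : (j < k)%N -> maps_head M0 (psum t j.+1) (psum s j).
Proof. by apply: (maps_head_of_blocks (maps_head_dlsubmx M0_dl) M0_blocks); rewrite addn1. Qed.

Lemma M0_tail : maps_head M0 (psum t k) (psum s k).
Proof. by apply: (maps_head_of_blocks (maps_head_dlsubmx M0_dl) M0_blocks); rewrite ?leq_addr. Qed.

Lemma M1_head j : (j <= k)%N -> maps_head M1 (psum t j) (psum s j).
Proof. by apply: (maps_head_of_blocks (maps_head_dlsubmx M1_dl) M1_blocks); rewrite addn0. Qed.

Lemma Ar_full : row_full (getblk M0 (psum s k) (psum t k) p q).
Proof. by rewrite /row_full getblk_drsubmx Ar_rank. Qed.

Lemma A_full j : (j.+1 < k)%N -> row_full (getblk M0 (psum s j) (psum t j.+1) (s j) (t j.+1)).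
Proof. by move=> jk; rewrite /row_full -getblk_lead ?A_rank // ltnW. Qed.

Lemma E_free j : (j < k)%N -> row_free (getblk M1 (psum s j) (psum t j) (s j) (t j)).
Proof. by move=> jk; rewrite /row_free -getblk_lead ?E_rank. Qed.

Lemma M0_preimage_head j w : (j < k)%N ->
  head_supp (psum s j) (M0 *m w) -> head_supp (psum t j.+1) w.
Proof.
move=> jk; have [d kd] : exists d, k = (j.+1 + d)%N by exists (k - j.+1)%N; rewrite subnKC.
elim: d j kd jk => [|d IH] j kd jk Mw0.
  have w0 : head_supp (psum t k + q) w by move=> b; rewrite leqNgt ltn_ord.
  have Mw0' : head_supp (psum s k) (M0 *m w) by apply: (head_suppW _ Mw0); apply/leq_psum/ltnW.
  by rewrite -[j.+1]addn0 -kd; apply: head_supp_row_full Ar_full M0_tail w0 Mw0'.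
have j1k : (j.+1 < k)%N by rewrite kd addnS ltnS leq_addr.
have w0 : head_supp (psum t j.+1 + t j.+1) w.
  rewrite -psumS; apply: IH => //; first by rewrite kd !addSn !addnS.
  by apply: (head_suppW _ Mw0); apply/leq_psum.
exact: head_supp_row_full (psum_block_leq _ _ jk) (psum_block_leq _ _ j1k) (A_full j1k)
  (M0_head jk) w0 Mw0.
Qed.

Lemma M1_image_head j y : (j <= k)%N ->
  head_supp (psum s j) y -> exists2 w, head_supp (psum t j) w & y = M1 *m w.
Proof.
elim: j y => [|j IH] y jk y0.
  exists 0; first by move=> b _; rewrite mxE.
  by rewrite mulmx0; apply/head_supp0; move: y0; rewrite /psum big_ord0.
rewrite psumS in y0; have := M1_head jk; rewrite !psumS => M1_0.
have [u u0 yu0] := head_supp_row_free (psum_block_leq _ _ jk) (psum_block_leq _ _ jk)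
  (E_free jk) M1_0 y0.
have [w w0 yuw] := IH _ (ltnW jk) yu0.
exists (u + w); last by rewrite mulmxDr -yuw addrC subrK.
apply: head_suppD u0 (head_suppW _ w0); exact: leq_addr.
Qed.

Lemma wongU_head j y : (j <= k)%N -> wongU M0 M1 j y <-> head_supp (psum s j) y.
Proof.
elim: j y => [|j IH] y jk /=; first by rewrite /psum big_ord0; apply: iff_sym (head_supp0 y).
split=> [[w [w0 ->]]|/(M1_image_head jk)[w w0 ->]].
  by apply: maps_head_supp (M1_head jk) (M0_preimage_head jk _); apply/(IH _ (ltnW jk)).
by exists w; split=> //; apply/(IH _ (ltnW jk)); apply: maps_head_supp (M0_head jk) w0.
Qed.

Lemma wongV_head j w : (j < k)%N -> wongV M0 M1 j.+1 w <-> head_supp (psum t j.+1) w.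
Proof.
move=> jk; rewrite /wongV /preimg /=; split=> [/(wongU_head _ (ltnW jk))|w0].
  exact: M0_preimage_head.
by apply/(wongU_head _ (ltnW jk)); apply: maps_head_supp (M0_head jk) w0.
Qed.

End Staircase.

(* Blocks are 0-based: i = 0..k-1 corresponds to the paper's i+1.
   m = psum s k + p, n = psum t k + q;  A_r, E_r are p x q. *)
Theorem corollary4p2 (C : numClosedFieldType) (k p q : nat) (s t : nat -> nat)
  (L0 L1 : 'M[C]_(psum s k + p, psum t k + q))
  (U Ud S : 'M[C]_(psum s k + p)) (V Vd T : 'M[C]_(psum t k + q))
  (Ud' S' : 'M[C]_(psum s k)) (Vd' T' : 'M[C]_(psum t k)) :
  unitary U -> unitary V ->
  let M0 := ctrmx U *m L0 *m V in
  let M1 := ctrmx U *m L1 *m V in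
  (* U^*(L0 + lambda L1)V = [[A~, X],[0, A_r]] + lambda [[E~, Y],[0, E_r]] *)
  dlsubmx M0 = 0 -> dlsubmx M1 = 0 ->
  (* A_r has full column rank *)
  \rank (drsubmx M0) = q ->
  (* A~ + lambda E~ block upper triangular *)
  (forall i j, (j < i)%N -> (i < k)%N ->
     getblk (ulsubmx M0) (psum s i) (psum t j) (s i) (t j) = 0 /\
     getblk (ulsubmx M1) (psum s i) (psum t j) (s i) (t j) = 0) ->
  (* zero diagonal blocks of A~ *)
  (forall i, (i < k)%N -> getblk (ulsubmx M0) (psum s i) (psum t i) (s i) (t i) = 0) ->
  (* E_(i,i) full row rank *)
  (forall i, (i < k)%N ->
     \rank (getblk (ulsubmx M1) (psum s i) (psum t i) (s i) (t i)) = s i) ->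
  (* A_(i,i+1) full column rank *)
  (forall i, (i.+1 < k)%N ->
     \rank (getblk (ulsubmx M0) (psum s i) (psum t i.+1) (s i) (t i.+1)) = t i.+1) ->
  (* U_d, V_d unitary block diagonal, identity outside the leading part *)
  unitary Ud -> unitary Vd -> blkdiag s k Ud' -> blkdiag t k Vd' ->
  Ud = block_mx Ud' 0 0 1%:M -> Vd = block_mx Vd' 0 0 1%:M ->
  let N0 := ctrmx (U *m Ud) *m L0 *m (V *m Vd) in
  let N1 := ctrmx (U *m Ud) *m L1 *m (V *m Vd) in
  (* A_(i,i+1) = [Ahat; 0], Ahat square upper triangular invertible *)
  (forall i, (i.+1 < k)%N ->
     [/\ (t i.+1 <= s i)%N,
         upper_tri (getblk (ulsubmx N0) (psum s i) (psum t i.+1) (t i.+1) (t i.+1)),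
         getblk (ulsubmx N0) (psum s i) (psum t i.+1) (t i.+1) (t i.+1) \in unitmx &
         getblk (ulsubmx N0) (psum s i + t i.+1) (psum t i.+1) (s i - t i.+1) (t i.+1) = 0]) ->
  (* E_(i,i) = [0 Ehat], Ehat square upper triangular invertible *)
  (forall i, (i < k)%N ->
     [/\ (s i <= t i)%N,
         getblk (ulsubmx N1) (psum s i) (psum t i) (s i) (t i - s i) = 0,
         upper_tri (getblk (ulsubmx N1) (psum s i) (psum t i + (t i - s i)) (s i) (s i)) &
         getblk (ulsubmx N1) (psum s i) (psum t i + (t i - s i)) (s i) (s i) \in unitmx]) ->
  (* S, T unit upper triangular, extended by identity blocks *)
  unit_upper_tri S' -> unit_upper_tri T' ->
  S = block_mx S' 0 0 1%:M -> T = block_mx T' 0 0 1%:M ->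
  let B0 := invmx S *m N0 *m T in
  let B1 := invmx S *m N1 *m T in
  (* S, T bidiagonalize the leading subpencil *)
  (forall i j, (i < k)%N -> (j < k)%N -> j != i.+1 ->
     getblk (ulsubmx B0) (psum s i) (psum t j) (s i) (t j) = 0) ->
  (forall i j, (i < k)%N -> (j < k)%N -> j != i ->
     getblk (ulsubmx B1) (psum s i) (psum t j) (s i) (t j) = 0) ->
  let Shat := U *m Ud *m S in
  let That := V *m Vd *m T in
  forall i, (i < k)%N ->
    (forall x, wongU L0 L1 i.+1 x <->
       im (Shat *m (pid_mx (psum s i.+1) : 'M_(psum s k + p, psum s i.+1))) x) /\
    (forall v, wongV L0 L1 i.+1 v <->
       im (That *m (pid_mx (psum t i.+1) : 'M_(psum t k + q, psum t i.+1))) v).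
Proof.
move=> uU uV M0 M1 dl0 dl1 rkAr tri diag rkE rkA /mulmx1_unit[_ Ud1] /mulmx1_unit[_ Vd1]
  bdU bdV eUd eVd N0 N1 _ _ uS' uT' eS eT B0 B1 _ _ Shat That i ik.
subst Ud Vd S T.
have tri0 i' j ji i'k := (tri i' j ji i'k).1.
have tri1 i' j ji i'k := (tri i' j ji i'k).2.
have WU := wongU_head dl0 dl1 rkAr tri0 tri1 diag rkE rkA.
have WV := wongV_head dl0 dl1 rkAr tri0 tri1 diag rkE rkA.
have [U1 V1] := ((mulmx1_unit uU).2, (mulmx1_unit uV).2).
have eL (L : 'M_(psum s k + p, psum t k + q)) : U *m (ctrmx U *m L *m V) *m invmx V = L.
  by rewrite !mulmxA (mulmx1C uU) mul1mx mulmxK.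
split=> [x|v].
  rewrite -[L0]eL -[L1]eL wongU_mulmx ?unitmx_inv // WU //.
  exact: head_supp_im_blkdiag_triu _ ik U1 Ud1 bdU uS'.
rewrite -[L0]eL -[L1]eL wongV_mulmx ?unitmx_inv // WV //.
exact: head_supp_im_blkdiag_triu _ ik V1 Vd1 bdV uT'.
Qed.
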